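(* For any $\alpha\ge0$, almost surely $\bigcap_{n\ge1}\overline{T^\alpha_n}=\bigcap_{n\ge1}T^\alpha_n$.
   Context: Let $(X_j^i)_{j\ge 1,\,i\ge 0}$ be i.i.d. uniform on $\{-1,1\}$ and $(N_j(t),t\ge0)_{j\ge1}$ independent rate-$1$ Poisson processes independent of them; set $X_j(t)=X_j^i$ whenever $N_j(t)=i$ and $Z_n(t)=\sum_{k=1}^n\prod_{j=1}^k X_j(t)$. For $\alpha\ge0$ let $P^\alpha_n(t)=\{Z_i(t)\ge i^\alpha \ \forall i=1,\ldots,n\}$, $T^\alpha_n=\{t\in[0,1]:P^\alpha_n(t)\text{ holds}\}$, and $\overline{T^\alpha_n}$ its closure. *)

From HB Require Import structures.
From mathcomp Require Import all_boot all_order all_algebra.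
From mathcomp Require Import all_classical all_reals all_analysis.
Set Implicit Arguments. Unset Strict Implicit. Unset Printing Implicit Defensive.
Import Order.TTheory GRing.Theory Num.Theory.
Import numFieldNormedType.Exports.
Local Open Scope classical_set_scope.
Local Open Scope ring_scope.

(* Index of the underlying random variables:
   inl (j, i) : the sign X_j^i   (j >= 1, i >= 0)
   inr (j, k) : the k-th inter-arrival time of the Poisson process N_j (j >= 1, k >= 1) *)
Definition idx := ((nat * nat) + (nat * nat))%type.

Definition valid_idx (x : idx) : bool :=
  match x with
  | inl (j, _) => (1 <= j)%N
  | inr (j, k) => (1 <= j)%N && (1 <= k)%N
  end.

Definition mutually_independent {d} {T : measurableType d} {R : realType}
    (P : probability T R) {I : eqType} (J : pred I) (Y : I -> T -> R) : Prop :=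
  (forall i, J i -> measurable_fun setT (Y i)) /\
  forall (s : seq I) (B : I -> set R),
    uniq s -> all J s -> (forall i, measurable (B i)) ->
    P (\bigcap_(i in [set` s]) (Y i @^-1` B i)) =
    (\prod_(i <- s) P (Y i @^-1` B i))%E.

Section Model.
Context {d} {T : measurableType d} {R : realType}.
Variables (X : nat -> nat -> T -> R) (E : nat -> nat -> T -> R).

Definition rv_family (x : idx) : T -> R :=
  match x with inl (j, i) => X j i | inr (j, k) => E j k end.

Definition arrival (j i : nat) (w : T) : R := \sum_(1 <= m < i.+1) E j m w.

(* N_j(t) = the i with S_j(i) <= t < S_j(i+1)  (rate-1 Poisson process built
   from i.i.d. Exp(1) inter-arrival times; default 0 on the null set where no
   such i exists) *)
Definition poissonN (j : nat) (t : R) (w : T) : nat :=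
  xget 0%N [set i | arrival j i w <= t < arrival j i.+1 w].

Definition Xt (j : nat) (t : R) (w : T) : R := X j (poissonN j t w) w.

Definition Zn (n : nat) (t : R) (w : T) : R :=
  \sum_(1 <= k < n.+1) \prod_(1 <= j < k.+1) Xt j t w.

Definition Pevent (alpha : R) (n : nat) (t : R) (w : T) : Prop :=
  forall i : nat, (1 <= i <= n)%N -> (i%:R `^ alpha) <= Zn i t w.

Definition Tset (alpha : R) (n : nat) (w : T) : set R :=
  [set t | t \in `[0, 1] /\ Pevent alpha n t w].

End Model.

From HB Require Import structures.
From mathcomp Require Import all_boot all_order all_algebra.
From mathcomp Require Import all_classical all_reals all_analysis.
From mathcomp Require Import ring lra.
Import Order.TTheory GRing.Theory Num.Theory.
Import numFieldNormedType.Exports.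
Local Open Scope classical_set_scope.
Local Open Scope ring_scope.
Set Implicit Arguments. Unset Strict Implicit. Unset Printing Implicit Defensive.

(* Almost surely all interarrival times are positive, all signs are +-1 and
   every process N_j jumps only finitely often in [0, 1].  For such an
   outcome, a time t lying in the closure of every T_n but not in every T_n
   can only be approached from the left, so t is a jump time S_j(i) of some
   process and the walk k |-> Z_k(t-), built from the signs held just before
   t, stays >= 1 forever.  As S_j(i) is a function of the interarrival times
   only, these signs are fresh fair coin flips, so the walk stays >= 1 for r
   steps with probability at most the survival probability s_r(0) of a simple
   random walk started at 0.  The limit G(n) of s_r(n) as r -> oo is bounded,
   harmonic on n >= 1 and satisfies G(0) = G(1)/2; hence G is linear, hence
   0.  A countable union over (j, i) gives the null set. *)

Lemma indep_with_lambda_system d (T : measurableType d) (R : realType)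
    (P : probability T R) (F : set T) : measurable F ->
  lambda_system setT [set C | measurable C /\ P (C `&` F) = (P C * P F)%E].
Proof.
move=> mF; split => //.
- by split; [exact: measurableT | rewrite setTI probability_setT mul1e].
- move=> A B BA [mA hA] [mB hB]; split; first exact: measurableD.
  have Plty C : measurable C -> (P C < +oo)%E.
    by move=> mC; rewrite ltey_eq fin_num_measure.
  have -> : (A `\` B) `&` F = (A `&` F) `\` B by apply/seteqP; split => w /=; tauto.
  rewrite measureD //; [|exact: measurableI|exact/Plty/measurableI].
  rewrite setIAC (setIidr BA) measureD ?(setIidr BA) //; last exact: Plty.
  rewrite muleBl; first by congr (_ - _)%E; [exact: hA | exact: hB].
  - exact: fin_num_measure.
  - exact/fin_num_adde_defr/fin_num_measure.
- move=> G ndG hG; split; first by apply: bigcup_measurable => n _; case: (hG n).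
  have mG n : measurable (G n) by case: (hG n).
  have cvgGF : (P \o (fun n => G n `&` F)) @ \oo --> P (\bigcup_n (G n `&` F)).
    apply: nondecreasing_cvg_mu => [n||m n mn]; first exact: measurableI.
      by apply: bigcup_measurable => n _; exact: measurableI.
    by apply/subsetPset; apply: setSI; apply/subsetPset; exact: ndG.
  have cvgG : (P \o G) @ \oo --> P (\bigcup_n G n).
    by apply: nondecreasing_cvg_mu => //; exact: bigcup_measurable.
  have cvgGF' : (P \o (fun n => G n `&` F)) @ \oo --> (P (\bigcup_n G n) * P F)%E.
    rewrite (_ : P \o _ = fun n => (P (G n) * P F)%E); last first.
      by apply: funext => n /=; case: (hG n).
    exact: cvgeZr (fin_num_measure _ _ mF) cvgG.
  by rewrite setI_bigcupl; exact: (cvg_unique _ cvgGF cvgGF').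
Qed.

Section independence.
Context d (T : measurableType d) (R : realType) (P : probability T R)
  (I : eqType) (J : pred I) (Y : I -> T -> R).
Hypothesis HY : mutually_independent P J Y.

Definition cylinders_outside (Ex : pred I) : set (set T) :=
  [set A | exists s (B : I -> set R), [/\ uniq s, all J s, all (predC Ex) s,
     (forall i, measurable (B i)) & A = \bigcap_(i in [set` s]) (Y i @^-1` B i)]].

Lemma measurable_indep_preimage i B : J i -> measurable B -> measurable (Y i @^-1` B).
Proof. by move=> Ji mB; have := HY.1 i Ji measurableT B mB; rewrite setTI. Qed.

Lemma cylinders_outside_measurable Ex A : cylinders_outside Ex A -> measurable A.
Proof.
move=> [s [B [_ Js _ mB ->]]].
apply: fin_bigcap_measurable; first exact: finite_seq.
by move=> i /= si; apply: measurable_indep_preimage => //; exact: (allP Js).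
Qed.

Lemma sigma_outside_measurable Ex A : <<s cylinders_outside Ex >> A -> measurable A.
Proof.
apply: smallest_sub; first exact: sigma_algebra_measurable.
exact: cylinders_outside_measurable.
Qed.

Lemma cylinders_outside_setI_closed Ex : setI_closed (cylinders_outside Ex).
Proof.
move=> A1 A2 [s1 [B1 [u1 J1 E1 m1 ->]]] [s2 [B2 [u2 J2 E2 m2 ->]]].
pose B i := (if i \in s1 then B1 i else setT) `&` (if i \in s2 then B2 i else setT).
exists (undup (s1 ++ s2)), B; split.
- exact: undup_uniq.
- apply/allP => x; rewrite mem_undup mem_cat => /orP[];
    [exact: (allP J1) | exact: (allP J2)].
- apply/allP => x; rewrite mem_undup mem_cat => /orP[];
    [exact: (allP E1) | exact: (allP E2)].
- by move=> i; apply: measurableI; case: ifP.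
apply/seteqP; split => w /=.
  move=> [h1 h2] i /=; rewrite mem_undup mem_cat /B => _.
  by split; case: ifPn => // hi; [exact: h1 | exact: h2].
move=> h; split => i /= hi; have /= := h i; rewrite mem_undup mem_cat /B hi ?orbT /=.
- by move=> /(_ isT)[].
- by case: ifP => _ /(_ isT)[].
Qed.

Lemma cylinders_outside_indep (Ex : pred I) x0 B0 C : J x0 -> Ex x0 -> measurable B0 ->
  cylinders_outside Ex C ->
  P (C `&` Y x0 @^-1` B0) = (P C * P (Y x0 @^-1` B0))%E.
Proof.
move=> Jx0 Ex0 mB0 [s [B [us Js Es mB ->]]].
have x0s : x0 \notin s by apply/negP => /(allP Es) /=; rewrite Ex0.
pose B' i := if i == x0 then B0 else B i.
have B'E i : i \in s -> B' i = B i.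
  by rewrite /B'; case: eqP => // -> x0s'; move: x0s; rewrite x0s'.
have -> : (\bigcap_(i in [set` s]) Y i @^-1` B i) `&` Y x0 @^-1` B0 =
          \bigcap_(i in [set` (x0 :: s)]) Y i @^-1` B' i.
  have -> : [set` (x0 :: s)] = x0 |` [set` s].
    by apply/seteqP; split => i /=; rewrite inE => /predU1P.
  rewrite bigcap_setU1 setIC /B' eqxx; congr (_ `&` _).
  by apply: eq_bigcapr => i /= si; rewrite -/(B' i) B'E.
rewrite HY.2 //=; last first.
- by move=> i; rewrite /B'; case: eqP.
- by rewrite Jx0.
- by rewrite x0s.
rewrite HY.2 // big_cons /B' eqxx muleC; congr (_ * _)%E.
by apply: eq_big_seq => i si; rewrite -/(B' i) B'E.
Qed.

Lemma sigma_outside_indep (Ex : pred I) x0 B0 C : J x0 -> Ex x0 -> measurable B0 ->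
  <<s cylinders_outside Ex >> C ->
  P (C `&` Y x0 @^-1` B0) = (P C * P (Y x0 @^-1` B0))%E.
Proof.
move=> Jx0 Ex0 mB0 C_outside.
pose F := Y x0 @^-1` B0.
have mF : measurable F by exact: measurable_indep_preimage.
suff /(_ C C_outside)[] : <<s cylinders_outside Ex >> `<=`
    [set C | measurable C /\ P (C `&` F) = (P C * P F)%E] by [].
apply: lambda_system_subset => //.
- exact: cylinders_outside_setI_closed.
- exact: indep_with_lambda_system.
move=> A CA; split; first exact: cylinders_outside_measurable CA.
exact: cylinders_outside_indep Jx0 Ex0 mB0 CA.
Qed.

End independence.

Section arrivals.
Context d (T : measurableType d) (R : realType) (E : nat -> nat -> T -> R).

Lemma arrival0 k w : arrival E k 0 w = 0.
Proof. by rewrite /arrival big_geq. Qed.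

Lemma arrivalS k m w : arrival E k m.+1 w = arrival E k m w + E k m.+1 w.
Proof. by rewrite /arrival big_nat_recr. Qed.

Lemma arrival_le k w a b : (forall l, (1 <= l <= b)%N -> 0 <= E k l w) ->
  (a <= b)%N -> arrival E k a w <= arrival E k b w.
Proof.
elim: b => [|b IH] E_ge0; first by rewrite leqn0 => /eqP ->.
rewrite leq_eqVlt ltnS => /predU1P[-> //|ab].
have E_ge0' l : (1 <= l <= b)%N -> 0 <= E k l w.
  by move=> /andP[l1 lb]; rewrite E_ge0 // l1 ltnW.
apply: le_trans (IH E_ge0' ab) _; rewrite arrivalS lerDl.
by apply: E_ge0; rewrite leqnn.
Qed.

(* The clause on the interarrival times makes these events pairwise disjoint
   in [m] without any almost-sure assumption. *)
Definition last_jump_before (tau : T -> R) (k m : nat) : set T :=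
  [set w | (forall l, (1 <= l <= m.+1)%N -> 0 < E k l w) /\
     arrival E k m w < tau w /\ tau w <= arrival E k m.+1 w].

Lemma last_jump_before_uniq tau k m m' w :
  last_jump_before tau k m w -> last_jump_before tau k m' w -> m = m'.
Proof.
wlog lt_mm' : m m' / (m < m')%N.
  move=> H h h'; case: (ltngtP m m') => [lt|gt|//]; first exact: H.
  exact/esym/(H m' m).
move=> [_ [_ le_tau]] [E_gt0 [lt_tau _]]; exfalso.
have : arrival E k m.+1 w <= arrival E k m' w.
  apply: arrival_le lt_mm' => l /andP[l1 lm']; apply/ltW/E_gt0.
  by rewrite l1 ltnW.
by move/(le_trans le_tau); rewrite leNgt lt_tau.
Qed.

End arrivals.

Section sigma_outside.
Context d (T : measurableType d) (R : realType)
  (X : nat -> nat -> T -> R) (E : nat -> nat -> T -> R).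

Definition sigma_outside (Ex : pred idx) :=
  g_sigma_algebraType (cylinders_outside valid_idx (rv_family X E) Ex).

Definition signs_from (k : nat) : pred idx :=
  fun x => if x is inl (k', _) then (k <= k')%N else false.

Definition keeps_interarrivals (Ex : pred idx) := forall k l, Ex (inr (k, l)) = false.

Lemma measurable_outside_preimage (Ex : pred idx) x (B : set R) :
  valid_idx x -> ~~ Ex x -> measurable B ->
  @measurable _ (sigma_outside Ex) (rv_family X E x @^-1` B).
Proof.
move=> vx nEx mB; apply: sub_sigma_algebra.
exists [:: x], (fun _ => B); split => //=; rewrite ?vx ?nEx //.
by rewrite set_cons1 bigcap_set1.
Qed.

Lemma sigma_outside_sub (Ex Ex' : pred idx) A : (forall x, Ex' x -> Ex x) ->
  @measurable _ (sigma_outside Ex) A -> @measurable _ (sigma_outside Ex') A.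
Proof.
move=> Ex'Ex; apply: sub_sigma_algebra2 => B [s [F [us Js Es mF ->]]].
exists s, F; split => //; apply/allP => x xs /=.
by apply: contraNN (allP Es x xs) => /Ex'Ex.
Qed.

Section interarrival_measurability.
Variables (Ex : pred idx) (keepsE : keeps_interarrivals Ex).

Lemma measurable_interarrival_outside k l : (1 <= k)%N -> (1 <= l)%N ->
  measurable_fun (setT : set (sigma_outside Ex)) (E k l).
Proof.
move=> k1 l1 _ B mB; rewrite setTI.
by apply: (measurable_outside_preimage (x := inr (k, l))); rewrite /= ?k1 ?l1 ?keepsE.
Qed.

Lemma measurable_arrival_outside k m : (1 <= k)%N ->
  measurable_fun (setT : set (sigma_outside Ex)) (arrival E k m).
Proof.
move=> k1; elim: m => [|m IH].
  by rewrite (_ : arrival E k 0 = cst 0) //; apply/funext => w; rewrite arrival0.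
rewrite (_ : arrival E k m.+1 = arrival E k m \+ E k m.+1).
  by apply: measurable_realfun.measurable_funD => //; exact: measurable_interarrival_outside.
by apply/funext => w; rewrite arrivalS.
Qed.

Lemma measurable_last_jump_before (tau : T -> R) k m : (1 <= k)%N ->
  measurable_fun (setT : set (sigma_outside Ex)) tau ->
  @measurable _ (sigma_outside Ex) (last_jump_before E tau k m).
Proof.
move=> k1 mtau; have mS := measurable_arrival_outside _ k1.
have -> : last_jump_before E tau k m =
    \bigcap_(l in [set l | (1 <= l <= m.+1)%N]) (E k l @^-1` `]0, +oo[) `&`
    ((fun w => arrival E k m w < tau w) @^-1` [set true] `&`
     (fun w => tau w <= arrival E k m.+1 w) @^-1` [set true]).
  by apply/seteqP; split => w /= [Egt0 tauw]; split => // l /= /Egt0;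
    rewrite /= in_itv /= andbT.
apply: measurableI; last apply: measurableI.
- apply: bigcap_measurableType => l /= /andP[l1 _].
  by rewrite -[X in measurable X]setTI; exact: measurable_interarrival_outside.
- by rewrite -[X in measurable X]setTI; exact: measurable_realfun.measurable_fun_ltr.
- by rewrite -[X in measurable X]setTI; exact: measurable_realfun.measurable_fun_ler.
Qed.

End interarrival_measurability.

End sigma_outside.

Section survival.
Variable R : realType.

(* The probability that a fair +-1 walk started at [h] stays >= 1 during its
   first [r] steps. *)
Fixpoint survival (r : nat) (h : R) : R :=
  if r is r'.+1 then
    ((if 1 <= h + 1 then survival r' (h + 1) else 0) +
     (if 1 <= h - 1 then survival r' (h - 1) else 0)) / 2
  else 1.

Lemma survival_ge0 r h : 0 <= survival r h.
Proof.
elim: r h => [|r IH] h /=; first exact: ler01.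
by rewrite divr_ge0 // addr_ge0 //; case: ifP.
Qed.

Lemma survival_sign r h c : c = 1 \/ c = -1 ->
  2^-1 * ((if 1 <= h + c then survival r (h + c) else 0) +
          (if 1 <= h - c then survival r (h - c) else 0)) = survival r.+1 h.
Proof. by move=> [->|->] /=; rewrite mulrC // opprK addrC. Qed.

Lemma survivalS_le r h : survival r.+1 h <= survival r h.
Proof.
elim: r h => [|r IH] h.
  rewrite /= ler_pdivrMr // mul1r.
  by case: ifP => _; case: ifP => _; rewrite ?addr0 ?add0r ?ler1n //; lra.
rewrite [survival r.+2 h]/= [survival r.+1 h]/= ler_pM2r // lerD //;
  by case: ifP => // _; exact: IH.
Qed.

Lemma survival_nonincreasing h : {homo survival^~ h : n m / (n <= m)%N >-> m <= n}.
Proof.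
move=> n m /subnK <-; elim: (m - n)%N => [//|k IH].
by rewrite addSn; exact: le_trans (survivalS_le _ _) IH.
Qed.

Lemma survivalS_nat r n : survival r.+1 n.+1%:R =
  (survival r n.+2%:R + (if (1 <= n)%N then survival r n%:R else 0)) / 2 :> R.
Proof.
rewrite /= natr1 (_ : n.+1%:R - 1 = n%:R :> R) ?ler1n //.
by rewrite -natr1 addrK.
Qed.

Lemma survivalS0 r : survival r.+1 0 = survival r 1 / 2 :> R.
Proof.
rewrite /= add0r lexx sub0r (_ : 1 <= -1 = false) ?addr0 //.
by apply/negbTE; rewrite -ltNge; lra.
Qed.

Definition survival_limit (n : nat) : R := inf (range (survival^~ n%:R)).

Lemma survival_range_lbound n : has_lbound (range (survival^~ n%:R)).
Proof. by exists 0 => _ [r _ <-]; exact: survival_ge0. Qed.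

Lemma survival_cvg n : survival^~ n%:R @ \oo --> survival_limit n.
Proof.
apply: nonincreasing_cvgn; first exact: survival_nonincreasing.
exact: survival_range_lbound.
Qed.

Lemma survival_limit_ge0 n : 0 <= survival_limit n.
Proof.
apply: lb_le_inf; first by exists (survival 0 n%:R), 0%N.
by move=> _ [r _ <-]; exact: survival_ge0.
Qed.

Lemma survival_limit_le1 n : survival_limit n <= 1.
Proof. by apply: (ge_inf (survival_range_lbound n)); exists 0%N. Qed.

Lemma survival_limitS n : survival_limit n.+1 =
  (survival_limit n.+2 + (if (1 <= n)%N then survival_limit n else 0)) / 2.
Proof.
have cvgS := @survival_cvg n.+1; rewrite -cvg_shiftS in cvgS.
suff cvgS' : (fun r => survival r.+1 n.+1%:R) @ \oo -->
    (survival_limit n.+2 + (if (1 <= n)%N then survival_limit n else 0)) / 2.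
  exact: cvg_unique _ cvgS cvgS'.
under eq_fun do rewrite survivalS_nat.
apply: cvgMl; apply: cvgD; first exact: survival_cvg.
by case: ifP => _; [exact: survival_cvg | exact: cvg_cst].
Qed.

Lemma survival_limit0 : survival_limit 0 = survival_limit 1 / 2.
Proof.
have cvgS := @survival_cvg 0; rewrite -cvg_shiftS in cvgS.
suff cvgS' : (fun r => survival r.+1 0%:R) @ \oo --> survival_limit 1 / 2.
  exact: cvg_unique _ cvgS cvgS'.
by under eq_fun do rewrite survivalS0; apply: cvgMl; exact: survival_cvg.
Qed.

(* The limit is harmonic on the positive integers, hence linear there. *)
Lemma survival_limit_linear n : survival_limit n.+1 = n.+1%:R * survival_limit 1.
Proof.
suff : survival_limit n.+1 = n.+1%:R * survival_limit 1 /\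
       survival_limit n.+2 = n.+2%:R * survival_limit 1 by case.
elim: n => [|n [IH1 IH2]].
  by split; [rewrite mul1r | have := survival_limitS 0; rewrite addr0; lra].
split => //; have := survival_limitS n.+1; rewrite /= IH1 IH2.
rewrite -[n.+3]addn1 -[n.+2]addn1 -[n.+1]addn1 !natrD; lra.
Qed.

Lemma survival_limit1 : survival_limit 1 = 0.
Proof.
apply/eqP; rewrite eq_le survival_limit_ge0 andbT leNgt; apply/negP => lim1_gt0.
pose n := Num.Def.trunc (1 / survival_limit 1).
have := survival_limit_le1 n.+1; rewrite survival_limit_linear.
have : 1 < n.+1%:R * survival_limit 1 by rewrite -ltr_pdivrMr // truncnS_gt.
lra.
Qed.

Lemma survival0_small (eps : R) : 0 < eps -> exists r, survival r 0 < eps.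
Proof.
move=> eps_gt0; have inf_range : has_inf (range (survival^~ 0%:R)).
  by split; [exists 1, 0%N | exact: survival_range_lbound].
have [_ [r _ <-]] := inf_adherent eps_gt0 inf_range.
rewrite -/(survival_limit 0) survival_limit0 survival_limit1 mul0r add0r.
by exists r.
Qed.

End survival.

Section left_walk.
Context d (T : measurableType d) (R : realType) (P : probability T R)
  (X : nat -> nat -> T -> R) (E : nat -> nat -> T -> R).
Hypothesis Hind : mutually_independent P valid_idx (rv_family X E).
Hypothesis HX1 : forall j i, (1 <= j)%N -> P (X j i @^-1` [set 1]) = (2^-1)%:E.
Hypothesis HXm1 : forall j i, (1 <= j)%N -> P (X j i @^-1` [set -1]) = (2^-1)%:E.
Variable tau : T -> R.
Hypothesis mtau : forall Ex, keeps_interarrivals Ex ->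
  measurable_fun (setT : set (sigma_outside X E Ex)) tau.

(* Starting at height [h] with running sign product [c], the walk whose steps
   are the products of the signs X_k, X_(k+1), ... held just before [tau]
   stays >= 1 during [r] steps. *)
Fixpoint left_walk (r k : nat) (h c : R) : set T :=
  if r is r'.+1 then
    \bigcup_m (last_jump_before E tau k m `&`
      (X k m @^-1` [set 1] `&`
         (if 1 <= h + c then left_walk r' k.+1 (h + c) c else set0) `|`
       X k m @^-1` [set -1] `&`
         (if 1 <= h - c then left_walk r' k.+1 (h - c) (- c) else set0)))
  else setT.

Lemma preimage_signs_disjoint (U : Type) (f : U -> R) :
  f @^-1` [set 1] `&` f @^-1` [set -1] = set0.
Proof. by apply/seteqP; split => // u [/= ->]; lra. Qed.

Lemma measurable_sign_preimage k m s : (1 <= k)%N -> measurable (X k m @^-1` [set s]).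
Proof. by move=> k1; apply: (measurable_indep_preimage Hind (i := inl (k, m))). Qed.

Lemma measurable_last_jump k m : (1 <= k)%N -> measurable (last_jump_before E tau k m).
Proof.
move=> k1; apply: (sigma_outside_measurable Hind (Ex := signs_from k)).
by apply: measurable_last_jump_before => //; exact: mtau.
Qed.

Lemma measurable_left_walk r k h c : (1 <= k)%N -> measurable (left_walk r k h c).
Proof.
elim: r k h c => [|r IH] k h c k1 /=; first exact: measurableT.
apply: bigcup_measurable => m _; apply: measurableI; first exact: measurable_last_jump.
have mbranch s h' c' : measurable (X k m @^-1` [set s] `&`
    (if 1 <= h' then left_walk r k.+1 h' c' else set0)).
  apply: measurableI; first exact: measurable_sign_preimage.
  by case: ifP => // _; apply: IH; exact: leqW.
exact: measurableU.
Qed.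

Definition left_walk_bound r k := forall h c (C : set T), (c = 1 \/ c = -1) ->
  @measurable _ (sigma_outside X E (signs_from k)) C ->
  (P (C `&` left_walk r k h c) <= P C * (survival r h)%:E)%E.

Lemma left_walk_step_le r k m (s h c : R) (C : set T) : (1 <= k)%N ->
  (s = 1 \/ s = -1) -> left_walk_bound r k.+1 ->
  (c = 1 \/ c = -1) -> @measurable _ (sigma_outside X E (signs_from k)) C ->
  (P (C `&` last_jump_before E tau k m `&`
      (X k m @^-1` [set s] `&` (if (1 <= h)%R then left_walk r k.+1 h c else set0))) <=
   P (C `&` last_jump_before E tau k m) *
   (2^-1 * (if (1 <= h)%R then survival r h else 0))%:E)%E.
Proof.
move=> k1 s_sign IH c_sign mC; set A := C `&` _.
have mA : @measurable _ (sigma_outside X E (signs_from k)) A.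
  by apply: measurableI => //; apply: measurable_last_jump_before => //; exact: mtau.
case: ifP => _; last by rewrite setI0 setI0 measure0 mulr0 mule0.
have indepX : P (A `&` X k m @^-1` [set s]) = (P A * (2^-1)%:E)%E.
  rewrite (sigma_outside_indep Hind (Ex := signs_from k) (x0 := inl (k, m))) //=.
  by case: s_sign => ->; [rewrite HX1 | rewrite HXm1].
rewrite setIA; apply: le_trans (IH _ _ _ c_sign _) _; last by rewrite indepX EFinM muleA.
apply: measurableI; first by apply: sigma_outside_sub mA => -[[k' i]|] //= /ltnW.
by apply: (measurable_outside_preimage (x := inl (k, m))); rewrite /= ?ltnn.
Qed.

Lemma left_walk_le r k : (1 <= k)%N -> left_walk_bound r k.
Proof.
elim: r k => [|r IH] k k1 h c C c_sign mC; first by rewrite /= setIT mule1.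
have mCT := sigma_outside_measurable Hind mC.
pose A m := C `&` last_jump_before E tau k m.
pose branch m s h' c' := X k m @^-1` [set s] `&`
  (if (1 <= h')%R then left_walk r k.+1 h' c' else set0).
have mA m : measurable (A m) by apply: measurableI => //; exact: measurable_last_jump.
have mAbranch m s h' c' : measurable (A m `&` branch m s h' c').
  apply: measurableI => //; apply: measurableI; first exact: measurable_sign_preimage.
  by case: ifP => // _; apply: measurable_left_walk; exact: leqW.
have disjA : trivIset setT A.
  by move=> i j _ _ [w [[_ hi] [_ hj]]]; exact: last_jump_before_uniq hi hj.
have -> : C `&` left_walk r.+1 k h c =
    \bigcup_m (A m `&` branch m 1 (h + c) c `|` A m `&` branch m (-1) (h - c) (- c)).
  by rewrite /= setI_bigcupr; apply: eq_bigcupr => m _; rewrite setIA setIUr.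
rewrite measure_bigcup; last 2 first.
- by move=> m _; exact: measurableU.
- move=> i j _ _ [w []]; rewrite -!setIUr => -[[_ hi] _] [[_ hj] _].
  exact: last_jump_before_uniq hi hj.
apply: (@le_trans _ _ (\sum_(0 <= m <oo | m \in setT) P (A m) * (survival r.+1 h)%:E)%E).
  apply: lee_nneseries => [m _ _|m _]; first exact: measure_ge0.
  rewrite measureU //; last first.
    apply/seteqP; split => // w [[_ [X1 _]] [_ [Xm1 _]]].
    by rewrite -(preimage_signs_disjoint (X k m)).
  rewrite -(survival_sign r h c_sign) mulrDr EFinD muleDr ?fin_num_measure //.
  have IHk := IH k.+1 (leqW k1).
  apply: leeD; apply: left_walk_step_le => //; [by left | by right |].
  by case: c_sign => ->; [right | left; rewrite opprK].
under eq_eseriesr do rewrite muleC.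
rewrite nneseriesZl; last by move=> m _; exact: measure_ge0.
rewrite -measure_bigcup // muleC lee_wpmul2r ?lee_fin ?survival_ge0 //.
by apply: le_measure; rewrite ?inE //; [exact: bigcup_measurable | move=> w [m _ []]].
Qed.

End left_walk.

Lemma closure_dist_lt (R : realType) (A : set R) t (e : R) : closure A t -> 0 < e ->
  exists2 t', A t' & `|t - t'| < e.
Proof.
move=> At e_gt0; have [t' [At' tt']] := At _ (nbhsx_ballx t e e_gt0).
by exists t' => //; rewrite -ball_normE.
Qed.

Lemma exists_pos_lbound (R : realType) (n : nat) (f : nat -> R) :
  (forall k, (1 <= k <= n)%N -> 0 < f k) ->
  exists2 e, 0 < e & forall k, (1 <= k <= n)%N -> e <= f k.
Proof.
elim: n => [|n IH] f_gt0; first by exists 1 => // k /andP[/leq_trans/[apply]].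
have [e e_gt0 le_ef] : exists2 e, 0 < e & forall k, (1 <= k <= n)%N -> e <= f k.
  by apply: IH => k /andP[k1 kn]; rewrite f_gt0 // k1 leqW.
exists (Num.min e (f n.+1)); first by rewrite lt_min e_gt0 f_gt0 /= ?leqnn.
move=> k /andP[k1]; rewrite leq_eqVlt ltnS => /predU1P[->|kn].
  by rewrite ge_min lexx orbT.
by rewrite ge_min le_ef ?k1.
Qed.

Lemma partial_prod_sum_recl (R : ringType) (x : nat -> R) (c : R) k l : (k <= l)%N ->
  \sum_(k <= k' < l.+1) c * \prod_(k <= j < k'.+1) x j =
  c * x k + \sum_(k.+1 <= k' < l.+1) (c * x k) * \prod_(k.+1 <= j < k'.+1) x j.
Proof.
move=> kl; rewrite big_ltn ?ltnS // big_nat1; congr (_ + _).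
by apply: eq_big_nat => k' /andP[kk' _]; rewrite big_ltn 1?ltnW // mulrA.
Qed.

Section deterministic.
Context d (T : measurableType d) (R : realType)
  (X : nat -> nat -> T -> R) (E : nat -> nat -> T -> R).

Definition regular (w : T) :=
  [/\ forall k l, (1 <= k)%N -> (1 <= l)%N -> 0 < E k l w,
      forall k i, (1 <= k)%N -> X k i w = 1 \/ X k i w = -1 &
      forall k, (1 <= k)%N -> exists l, 1 < arrival E k l w].

Variable w : T.
Hypothesis regw : regular w.

Local Notation S k m := (arrival E k m w).

Lemma regular_arrival_le k a b : (1 <= k)%N -> (a <= b)%N -> S k a <= S k b.
Proof.
move=> k1; apply: arrival_le => l /andP[l1 _]; apply/ltW.
by case: regw => E_gt0 _ _; exact: E_gt0.
Qed.

(* [Nt k t m] and [Nleft k t m] say that N_k(t) = m and N_k(t-) = m. *)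
Definition Nt k t m := S k m <= t < S k m.+1.
Definition Nleft k t m := S k m < t <= S k m.+1.

Lemma Nt_uniq k t a b : (1 <= k)%N -> Nt k t a -> Nt k t b -> a = b.
Proof.
move=> k1; wlog ab : a b / (a < b)%N.
  move=> H ta tb; case: (ltngtP a b) => [lt|gt|//]; first exact: H.
  exact/esym/(H b a).
move=> /andP[_ t_lt] /andP[t_ge _]; have := le_lt_trans t_ge t_lt.
by rewrite ltNge regular_arrival_le.
Qed.

Lemma Nt_exists k t : (1 <= k)%N -> 0 <= t <= 1 -> exists m, Nt k t m.
Proof.
move=> k1 /andP[t_ge0 t_le1].
have ex_lt : exists l, t < S k l.
  by case: regw => _ _ /(_ k k1)[l ?]; exists l; exact: le_lt_trans t_le1 _.
case: (ex_minnP ex_lt) => -[|m] t_ltm min_m.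
  by move: t_ltm; rewrite arrival0 ltNge t_ge0.
by exists m; rewrite /Nt t_ltm andbT leNgt; apply/negP => /min_m; rewrite ltnn.
Qed.

Lemma Nleft_exists k t : (1 <= k)%N -> 0 < t <= 1 -> exists m, Nleft k t m.
Proof.
move=> k1 /andP[t_gt0 t_le1].
have ex_le : exists l, t <= S k l.
  by case: regw => _ _ /(_ k k1)[l ?]; exists l; exact/ltW/(le_lt_trans t_le1).
case: (ex_minnP ex_le) => -[|m] t_lem min_m.
  by move: t_lem; rewrite arrival0 leNgt t_gt0.
by exists m; rewrite /Nleft t_lem andbT ltNge; apply/negP => /min_m; rewrite ltnn.
Qed.

Lemma poissonN_eq k t m : (1 <= k)%N -> Nt k t m -> poissonN E k t w = m.
Proof.
move=> k1 tm; apply: (Nt_uniq k1 _ tm).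
by apply: (xgetPex 0%N (P := [set i | Nt k t i])); exists m.
Qed.

Lemma Nt_poissonN k t : (1 <= k)%N -> 0 <= t <= 1 -> Nt k t (poissonN E k t w).
Proof. by move=> k1 t01; have [m tm] := Nt_exists k1 t01; rewrite (poissonN_eq k1 tm). Qed.

Definition left_count t k : nat := xget 0%N [set m | Nleft k t m].

Lemma Nleft_left_count k t : (1 <= k)%N -> 0 < t <= 1 -> Nleft k t (left_count t k).
Proof.
by move=> k1 t01; apply: (xgetPex 0%N (P := [set m | Nleft k t m])); exact: Nleft_exists.
Qed.

Definition Z_at (L : nat -> nat) n : R :=
  \sum_(1 <= k < n.+1) \prod_(1 <= j < k.+1) X j (L j) w.

Lemma Zn_eq n t L : (forall k, (1 <= k <= n)%N -> Nt k t (L k)) ->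
  forall l, (l <= n)%N -> Zn X E l t w = Z_at L l.
Proof.
move=> tL l ln; apply: eq_big_nat => k /andP[_ kl]; apply: eq_big_nat => j /andP[j1 jk].
by rewrite /Xt (poissonN_eq j1 (tL j _)) // j1 (leq_trans (leq_trans jk kl : j <= l)%N ln).
Qed.

(* The event P^alpha_n(t-), read on the left limits of the signs. *)
Definition Pleft alpha n t :=
  forall l, (1 <= l <= n)%N -> l%:R `^ alpha <= Z_at (left_count t) l.

Lemma Pleft_le alpha m n t : (m <= n)%N -> Pleft alpha n t -> Pleft alpha m t.
Proof. by move=> mn Pn l /andP[l1 lm]; rewrite Pn // l1 (leq_trans lm). Qed.

Lemma Tset_le alpha m n t : (m <= n)%N -> Tset X E alpha n w t -> Tset X E alpha m w t.
Proof. by move=> mn [t01 Pn]; split => // l /andP[l1 lm]; rewrite Pn // l1 (leq_trans lm). Qed.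

Lemma Nt_right_constant n t : 0 <= t <= 1 -> exists2 e, 0 < e &
  forall t', t <= t' < t + e -> forall k, (1 <= k <= n)%N -> Nt k t' (poissonN E k t w).
Proof.
move=> t01.
have [e e_gt0 le_e] : exists2 e, 0 < e &
    forall k, (1 <= k <= n)%N -> e <= S k (poissonN E k t w).+1 - t.
  apply: exists_pos_lbound => k /andP[k1 _].
  by have /andP[_] := Nt_poissonN k1 t01; rewrite subr_gt0.
exists e => // t' /andP[tt' t'e] k /andP[k1 kn].
have /andP[St _] := Nt_poissonN k1 t01; have := le_e k; rewrite k1 kn => /(_ isT).
rewrite /Nt (le_trans St tt') /=; lra.
Qed.

Lemma Nt_left_constant n t : 0 < t <= 1 -> exists2 e, 0 < e &
  forall t', t - e < t' < t -> forall k, (1 <= k <= n)%N -> Nt k t' (left_count t k).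
Proof.
move=> t01.
have [e e_gt0 le_e] : exists2 e, 0 < e &
    forall k, (1 <= k <= n)%N -> e <= t - S k (left_count t k).
  apply: exists_pos_lbound => k /andP[k1 _].
  by have /andP[St _] := Nleft_left_count k1 t01; rewrite subr_gt0.
exists e => // t' /andP[et' t't] k /andP[k1 kn].
have /andP[_ St] := Nleft_left_count k1 t01; have := le_e k; rewrite k1 kn => /(_ isT) le_ek.
by rewrite /Nt; apply/andP; split; lra.
Qed.

Lemma closure_Tset_01 alpha n t : closure (Tset X E alpha n w) t -> 0 <= t <= 1.
Proof.
have sub01 : Tset X E alpha n w `<=` `[0, 1]%classic by move=> s [].
move=> /(closureS sub01); rewrite -(closure_id _).1 /= ?in_itv //.
exact: interval_closed.
Qed.

Lemma closure_Tset alpha n t : closure (Tset X E alpha n w) t ->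
  Tset X E alpha n w t \/ (0 < t /\ Pleft alpha n t).
Proof.
move=> cl_t; have t01 := closure_Tset_01 cl_t.
have [eR eR_gt0 right_eR] := Nt_right_constant n t01.
have Nt_t k : (1 <= k <= n)%N -> Nt k t (poissonN E k t w).
  by case/andP => k1 _; exact: Nt_poissonN.
have Tset_right t' : Tset X E alpha n w t' -> t <= t' < t + eR -> Tset X E alpha n w t.
  move=> [_ Pt'] /right_eR Nt'; split; first by rewrite in_itv.
  by move=> l /andP[l1 ln]; rewrite (Zn_eq Nt_t ln) -(Zn_eq Nt' ln) Pt' // l1.
have [t_gt0|t_le0] := ltrP 0 t; last first.
  have [t' Tt' tt'] := closure_dist_lt cl_t eR_gt0; left; apply: (Tset_right t' Tt').
  move: Tt' tt' => [+ _]; rewrite in_itv ltr_norml /= => /andP[t'_ge0 _] /andP[? ?].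
  by apply/andP; split; lra.
have t01' : 0 < t <= 1 by rewrite t_gt0; case/andP: t01.
have [eL eL_gt0 left_eL] := Nt_left_constant n t01'.
have e_gt0 : 0 < Num.min eR eL by rewrite lt_min eR_gt0.
have [t' [t'01 Pt'] tt'] := closure_dist_lt cl_t e_gt0.
have e_leR : Num.min eR eL <= eR by rewrite ge_min lexx.
have e_leL : Num.min eR eL <= eL by rewrite ge_min lexx orbT.
move: tt'; rewrite ltr_norml => /andP[? ?].
have [tt'|t't] := leP t t'.
  by left; apply: (Tset_right t'); [split | apply/andP; split; lra].
right; split => // l /andP[l1 ln].
have t'_left : t - eL < t' < t by apply/andP; split; lra.
by rewrite -(Zn_eq (left_eL t' t'_left) ln) Pt' // l1.
Qed.

Lemma closure_Tset_jump alpha t :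
  (forall n, (1 <= n)%N -> closure (Tset X E alpha n w) t) ->
  ~ (forall n, (1 <= n)%N -> Tset X E alpha n w t) ->
  exists j i, [/\ (1 <= j)%N, t = S j i, 0 < t <= 1 & forall n, Pleft alpha n t].
Proof.
move=> cl_t /existsNP[m0 /not_implyP[m0_ge1 not_Tm0]].
have t01 := closure_Tset_01 (cl_t 1%N isT).
have Pleft_ge n : (m0 <= n)%N -> 0 < t /\ Pleft alpha n t.
  move=> m0n; have [/(Tset_le m0n)/not_Tm0[]|//] :=
    closure_Tset (cl_t n (leq_trans m0_ge1 m0n)).
have t01' : 0 < t <= 1.
  by have [t_gt0 _] := Pleft_ge m0 (leqnn m0); case/andP: t01 => _ ->; rewrite t_gt0.
have Pleft_t n : Pleft alpha n t.
  by apply: (Pleft_le (leq_maxl n m0)); case: (Pleft_ge _ (leq_maxr n m0)).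
have [k /andP[k1 _] jump] : exists2 k, (1 <= k <= m0)%N & poissonN E k t w <> left_count t k.
  apply: contra_notP not_Tm0 => no_jump; split; first by rewrite in_itv.
  have same k : (1 <= k <= m0)%N -> poissonN E k t w = left_count t k.
    by move=> km0; apply: contra_notP no_jump => ?; exists k.
  move=> l /andP[l1 lm0]; rewrite (Zn_eq (L := left_count t) _ lm0).
    by apply: (Pleft_t m0); rewrite l1.
  by move=> k km0; rewrite -same //; case/andP: km0 => k1 _; exact: Nt_poissonN.
have /andP[Sm_lt Sm1_ge] := Nleft_left_count k1 t01'.
exists k, (left_count t k).+1; split => //.
apply/eqP; rewrite eq_le Sm1_ge leNgt /=; apply/negP => t_lt.
by apply: jump; apply: poissonN_eq => //; rewrite /Nt (ltW Sm_lt) t_lt.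
Qed.

Lemma left_walk_of_partial_sums (tau : T -> R) t : tau w = t -> 0 < t <= 1 ->
  forall r k h c, (1 <= k)%N ->
  (forall l, (k <= l < k + r)%N ->
     1 <= h + \sum_(k <= k' < l.+1) c * \prod_(k <= j < k'.+1) X j (left_count t j) w) ->
  left_walk X E tau r k h c w.
Proof.
move=> tau_t t01; elim=> [//|r IH] k h c k1 partial_ge1.
set m := left_count t k.
have := partial_ge1 k; rewrite leqnn addnS ltnS leq_addr => /(_ isT).
rewrite partial_prod_sum_recl // big_geq // addr0 => step_ge1.
have tail_ge1 l : (k.+1 <= l < k.+1 + r)%N -> 1 <= (h + c * X k m w) +
    \sum_(k.+1 <= k' < l.+1) (c * X k m w) * \prod_(k.+1 <= j < k'.+1) X j (left_count t j) w.
  move=> /andP[kl lr]; rewrite -addrA -partial_prod_sum_recl 1?ltnW //.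
  by apply: partial_ge1; rewrite ltnW //= -addSnnS.
case: regw => E_gt0 X_sign _; exists m => //; split.
  have /andP[Sm_lt Sm1_ge] := Nleft_left_count k1 t01.
  by split; [move=> l /andP[l1 _]; exact: E_gt0 | rewrite tau_t Sm_lt Sm1_ge].
have [Xk|Xk] := X_sign k m k1; [left|right]; split => //;
  move: step_ge1 tail_ge1; rewrite Xk ?mulr1 ?mulrN1 => -> tail_ge1;
  exact: IH.
Qed.

Lemma left_walk_at_jump alpha t j i : 0 <= alpha -> t = S j i -> 0 < t <= 1 ->
  (forall n, Pleft alpha n t) -> forall r, left_walk X E (arrival E j i) r 1 0 1 w.
Proof.
move=> alpha_ge0 t_eq t01 Pleft_t r.
apply: (left_walk_of_partial_sums (esym t_eq) t01) => // l /andP[l1 lr].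
rewrite add0r; under eq_bigr do rewrite mul1r.
have l_ge1 : 1 <= l%:R :> R by rewrite ler1n.
apply: le_trans (Pleft_t r l _); last by rewrite l1 -ltnS -add1n.
by rewrite -{1}(powRr0 l%:R) ler_powR.
Qed.

End deterministic.

Lemma measure_le_eps_eq0 d (T : measurableType d) (R : realType)
    (mu : {measure set T -> \bar R}) (A : set T) :
  (forall e : R, 0 < e -> (mu A <= e%:E)%E) -> mu A = 0%E.
Proof.
move=> small; apply/le_anti; rewrite measure_ge0 andbT.
by apply/lee_addgt0Pr => e e_gt0; rewrite add0e small.
Qed.

Lemma expr_lt_eps (R : realType) (c e : R) : 0 <= c < 1 -> 0 < e -> exists L, c ^+ L < e.
Proof.
move=> /andP[c_ge0 c_lt1] e_gt0; have c_norm : `|c| < 1 by rewrite ger0_norm.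
have [L _ /(_ L (leqnn L))] := cvg_expr c_norm (nbhsx_ballx 0 e e_gt0).
by rewrite -ball_normE /= sub0r normrN => /(le_lt_trans (ler_norm _)); exists L.
Qed.

Section null_events.
Context d (T : measurableType d) (R : realType) (P : probability T R)
  (X : nat -> nat -> T -> R) (E : nat -> nat -> T -> R).
Hypothesis Hind : mutually_independent P valid_idx (rv_family X E).
Hypothesis HX1 : forall j i, (1 <= j)%N -> P (X j i @^-1` [set 1]) = (2^-1)%:E.
Hypothesis HXm1 : forall j i, (1 <= j)%N -> P (X j i @^-1` [set -1]) = (2^-1)%:E.
Hypothesis HE : forall j k, (1 <= j)%N -> (1 <= k)%N ->
  forall s : R, 0 <= s -> P (E j k @^-1` `]s, +oo[) = (expR (- s))%:E.

Lemma measurable_interarrival_preimage k l (B : set R) : (1 <= k)%N -> (1 <= l)%N ->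
  measurable B -> measurable (E k l @^-1` B).
Proof.
move=> k1 l1 mB.
by apply: (measurable_indep_preimage Hind (i := inr (k, l))) mB; rewrite /= k1.
Qed.

Lemma interarrival_le k l (s : R) : (1 <= k)%N -> (1 <= l)%N -> 0 <= s ->
  P (E k l @^-1` `]-oo, s]) = (1 - expR (- s))%:E.
Proof.
move=> k1 l1 s_ge0; rewrite -setCitvr preimage_setC probability_setC.
  by rewrite HE // EFinB.
exact: (measurable_interarrival_preimage k1 l1 (measurable_itv _)).
Qed.

Lemma negligible_interarrival_le0 k l : (1 <= k)%N -> (1 <= l)%N ->
  P.-negligible (E k l @^-1` `]-oo, 0]).
Proof.
move=> k1 l1; apply/negligibleP.
  exact: (measurable_interarrival_preimage k1 l1 (measurable_itv _)).
by apply: eq_trans (interarrival_le k1 l1 (lexx 0)) _; rewrite oppr0 expR0 subrr.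
Qed.

Lemma negligible_not_sign k i : (1 <= k)%N ->
  P.-negligible [set w | X k i w <> 1 /\ X k i w <> -1].
Proof.
move=> k1; have mX s : measurable (X k i @^-1` [set s]).
  exact: (measurable_sign_preimage Hind).
exists (~` (X k i @^-1` [set 1] `|` X k i @^-1` [set -1])); split.
- exact/measurableC/measurableU.
- rewrite probability_setC; last exact: measurableU.
  suff -> : P (X k i @^-1` [set 1] `|` X k i @^-1` [set -1]) = 1%:E by rewrite subee.
  rewrite measureU ?preimage_signs_disjoint //.
  apply: eq_trans (congr2 (fun a b => (a + b)%E) (HX1 i k1) (HXm1 i k1)) _.
  by rewrite -EFinD -div1r -splitr.
- by move=> w [X1 Xm1] [].
Qed.

Lemma negligible_bounded_interarrivals k : (1 <= k)%N ->
  P.-negligible [set w | forall l, (1 <= l)%N -> E k l w <= 1].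
Proof.
move=> k1; set c := 1 - expR (-1 : R).
have c01 : 0 <= c < 1.
  have := expR_gt0 (-1 : R); have : expR (-1 : R) < 1 by rewrite expR_lt1; lra.
  by rewrite /c => ? ?; apply/andP; split; lra.
set B := \bigcap_(l in [set l | (1 <= l)%N]) E k l @^-1` `]-oo, 1].
have mB : measurable B.
  apply: bigcap_measurableType => l /= l1.
  exact: (measurable_interarrival_preimage k1 l1 (measurable_itv _)).
exists B; split => //.
apply: measure_le_eps_eq0 => e e_gt0; have [L cL_lt] := expr_lt_eps c01 e_gt0.
pose s := [seq inr (k, l) | l <- iota 1 L] : seq idx.
pose cylinder := \bigcap_(x in [set` s]) (rv_family X E x @^-1` `]-oo, 1]).
have P_cylinder : P cylinder = (c ^+ L)%:E.
  rewrite Hind.2.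
  - rewrite big_map (eq_big_seq (fun=> c%:E)) ?prodEFin.
      have -> : iota 1 L = index_iota 1 L.+1 by rewrite /index_iota subn1.
      by rewrite prodr_const_nat subn1.
    by move=> l; rewrite mem_iota => /andP[l1 _]; exact: interarrival_le.
  - by rewrite map_inj_uniq ?iota_uniq // => a b [].
  - by apply/allP => x /mapP[l]; rewrite mem_iota => /andP[l1 _] -> /=; rewrite k1.
  - by move=> _; exact: measurable_itv.
have mcylinder : measurable cylinder.
  apply: fin_bigcap_measurable; first exact: finite_seq.
  move=> x /mapP[l]; rewrite mem_iota => /andP[l1 _] -> /=.
  exact: (measurable_interarrival_preimage k1 l1 (measurable_itv _)).
apply: (@le_trans _ _ (P cylinder)).
  apply: le_measure; rewrite ?inE //.
  by move=> w Bw x /mapP[l]; rewrite mem_iota => /andP[l1 _] -> /=; exact: Bw.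
by rewrite P_cylinder lee_fin ltW.
Qed.

Lemma negligible_not_regular : P.-negligible (~` [set w | regular X E w]).
Proof.
pose bad := ((\bigcup_k \bigcup_l E k.+1 l.+1 @^-1` `]-oo, 0]) `|`
   (\bigcup_k \bigcup_i [set w | X k.+1 i w <> 1 /\ X k.+1 i w <> -1])) `|`
   (\bigcup_k [set w | forall l, (1 <= l)%N -> E k.+1 l w <= 1]).
apply: (@negligibleS _ _ _ _ bad); last first.
  apply: negligibleU; first apply: negligibleU.
  - apply: negligible_bigcup => k; apply: negligible_bigcup => l.
    exact: negligible_interarrival_le0.
  - apply: negligible_bigcup => k; apply: negligible_bigcup => i.
    exact: negligible_not_sign.
  - by apply: negligible_bigcup => k; exact: negligible_bounded_interarrivals.
move=> w not_reg; apply: contrapT => not_bad; apply: not_reg.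
have E_gt0 k l : (1 <= k)%N -> (1 <= l)%N -> 0 < E k l w.
  move=> k1 l1; rewrite ltNge; apply/negP => E_le0; apply: not_bad; left; left.
  by exists k.-1 => //; exists l.-1 => //=; rewrite !prednK // in_itv.
split => // [k i k1|k k1]; apply: contrapT => not_reg_k; apply: not_bad.
  left; right; exists k.-1 => //; exists i => //=; rewrite prednK //.
  by split => Xki; apply: not_reg_k; [left|right].
right; exists k.-1 => //=; rewrite prednK // => l l1; rewrite leNgt.
apply/negP => E_gt1; apply: not_reg_k; exists l; apply: lt_le_trans E_gt1 _.
rewrite -[in leRHS](prednK l1) arrivalS prednK // lerDr -(arrival0 E k w).
by apply: arrival_le => // l' /andP[l'1 _]; exact/ltW/E_gt0.
Qed.

Lemma negligible_left_walk j i : (1 <= j)%N ->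
  P.-negligible (\bigcap_r left_walk X E (arrival E j i) r 1 0 1).
Proof.
move=> j1; have mtau Ex : keeps_interarrivals Ex ->
    measurable_fun (setT : set (sigma_outside X E Ex)) (arrival E j i).
  by move=> keepsE; exact: measurable_arrival_outside.
have mW r : measurable (left_walk X E (arrival E j i) r 1 0 1).
  exact: (measurable_left_walk Hind mtau r (k := 1) 0 1 isT).
exists (\bigcap_r left_walk X E (arrival E j i) r 1 0 1); split => //.
  exact: bigcapT_measurable.
apply: measure_le_eps_eq0 => e e_gt0; have [r small_r] := survival0_small e_gt0.
apply: (@le_trans _ _ (P (left_walk X E (arrival E j i) r 1 0 1))).
  by apply: le_measure; rewrite ?inE //; [exact: bigcapT_measurable | move=> w; apply].
have := left_walk_le Hind HX1 HXm1 mtau r (k := 1) isT 0 (or_introl erefl) measurableT.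
by rewrite setTI probability_setT mul1e => /le_trans; apply; rewrite lee_fin ltW.
Qed.

End null_events.

Unset Implicit Arguments. Set Strict Implicit.

Theorem lemma9 (d : measure_display) (T : measurableType d) (R : realType)
  (P : probability T R) (X : nat -> nat -> T -> R) (E : nat -> nat -> T -> R)
  (Hind : mutually_independent P valid_idx (rv_family X E))
  (HX1 : forall j i, (1 <= j)%N -> P (X j i @^-1` [set 1]) = (2^-1)%:E)
  (HXm1 : forall j i, (1 <= j)%N -> P (X j i @^-1` [set -1]) = (2^-1)%:E)
  (HE : forall j k, (1 <= j)%N -> (1 <= k)%N ->
          forall s : R, 0 <= s -> P (E j k @^-1` `]s, +oo[) = (expR (- s))%:E)
  (alpha : R) (Halpha : 0 <= alpha) :
  {ae P, forall w,
     \bigcap_(n in [set n : nat | (1 <= n)%N]) closure (Tset X E alpha n w) =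
     \bigcap_(n in [set n : nat | (1 <= n)%N]) Tset X E alpha n w}.
Proof.
pose walk_at_jump := \bigcup_j \bigcup_i \bigcap_r left_walk X E (arrival E j.+1 i) r 1 0 1.
have null : P.-negligible (~` [set w | regular X E w] `|` walk_at_jump).
  apply: negligibleU; first exact: negligible_not_regular.
  apply: negligible_bigcup => j; apply: negligible_bigcup => i.
  exact: negligible_left_walk.
apply: negligibleS null => w /= not_eq; apply: contrapT => /not_orP[/contrapT w_reg no_walk].
apply: not_eq; apply/seteqP; split => t /= t_cl; last by move=> n n1; exact/subset_closure/t_cl.
apply: contrapT => not_T.
have [j [i [j1 t_eq t01 Pleft_t]]] := closure_Tset_jump w_reg t_cl not_T.
apply: no_walk; exists j.-1 => //; exists i => //; rewrite prednK // => r _.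
exact: (left_walk_at_jump w_reg Halpha t_eq t01 Pleft_t).
Qed.
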